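(* Let $f:\{0,1\}^n\to\{0,1\}$ be a function that is not identically 1, and suppose $f$ has $k$ minimal 1-certificates $c_1,\dots,c_k$ that are pairwise non-overlapping and such that for each $i$, the total number of contradictions between $c_i$ and all the other $c_j$ ($j\neq i$) together is at most 2. Then $s_0(f)\ge k$.
   Context: A 1-certificate is a partial assignment $c:S\to\{0,1\}$, $S\subseteq[n]$, such that $f(y)=1$ for every $y\in\{0,1\}^n$ agreeing with $c$ on $S$; it is minimal if no restriction of $c$ to a proper subset of $S$ is a 1-certificate. The number of contradictions between two partial assignments is the number of positions where one assigns 1 and the other assigns 0; two partial assignments overlap if there is a position to which both assign the same value. $s_0(f)=\max\{|\{i: f(x^{\{i\}})\ne f(x)\}| : f(x)=0\}$, where $x^{\{i\}}$ is $x$ with bit $i$ flipped. *)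

From mathcomp Require Import all_boot all_order.
Set Implicit Arguments. Unset Strict Implicit. Unset Printing Implicit Defensive.

(* Inputs x in {0,1}^n are finite functions 'I_n -> bool (true = 1).
   A partial assignment c : S -> {0,1}, S a subset of [n], is encoded as
   c : {ffun 'I_n -> option bool} with S = {i | c i <> None}. *)

Definition input n := {ffun 'I_n -> bool}.
Definition passign n := {ffun 'I_n -> option bool}.

Definition pdom n (c : passign n) : {set 'I_n} := [set i | c i != None].

Definition agrees n (c : passign n) (y : input n) : bool :=
  [forall i, if c i is Some b then y i == b else true].

Definition one_cert n (f : input n -> bool) (c : passign n) : bool :=
  [forall y : input n, agrees c y ==> f y].

Definition restrict n (c : passign n) (T : {set 'I_n}) : passign n :=
  [ffun i => if i \in T then c i else None].

Definition min_one_cert n (f : input n -> bool) (c : passign n) : bool :=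
  one_cert f c &&
  [forall T : {set 'I_n}, (T \proper pdom c) ==> ~~ one_cert f (restrict c T)].

Definition ncontra n (c d : passign n) : nat :=
  #|[set i : 'I_n | [|| (c i == Some true) && (d i == Some false)
                     | (c i == Some false) && (d i == Some true)]]|.

Definition overlap n (c d : passign n) : bool :=
  [exists i : 'I_n, [exists b : bool, (c i == Some b) && (d i == Some b)]].

Definition flip n (x : input n) (i : 'I_n) : input n :=
  [ffun j => if j == i then ~~ x j else x j].

Definition sens n (f : input n -> bool) (x : input n) : nat :=
  #|[set i : 'I_n | f (flip x i) != f x]|.

(* s_0(f) = max sensitivity over 0-inputs (0 if there is none) *)
Definition s0 n (f : input n -> bool) : nat :=
  \max_(x : input n | ~~ f x) sens f x.

From mathcomp Require Import all_boot all_order.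
Set Implicit Arguments. Unset Strict Implicit. Unset Printing Implicit Defensive.

(* Since the certificates pairwise do not overlap, each position carries at
   most two of them, with opposite values.  The positions carrying two are the
   edges of a multigraph on the certificates whose degrees are bounded by the
   contradiction counts, hence by 2.  Such a graph has an orientation with all
   in-degrees at most 1; reading "t p contradicts the head of p" gives a point
   t that contradicts every certificate in at most one position.  Let y be a
   0-input closest to t.  Some position where y contradicts a given
   certificate is sensitive: either y differs from t there, and flipping it
   gets closer to t, or y contradicts the certificate only where t does, i.e.
   in a single position, and flipping it satisfies the certificate.  Positions
   obtained from different certificates differ, by non-overlap. *)

Lemma card_bigcup_le (I T : finType) (P : pred I) (F : I -> {set T}) :
  #|\bigcup_(i | P i) F i| <= \sum_(i | P i) #|F i|.
Proof.
elim/big_rec2: _ => [|i m U _ leUm]; first by rewrite cards0.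
by rewrite (leq_trans (leq_card_setU (F i) U).1) ?leq_add2l.
Qed.

Definition opposed (o o' : option bool) : bool :=
  [|| (o == Some true) && (o' == Some false)
    | (o == Some false) && (o' == Some true)].

Lemma opposedP o o' :
  reflect (exists b, o = Some b /\ o' = Some (~~ b)) (opposed o o').
Proof.
apply: (iffP idP) => [|[[] [-> ->]]] //.
by case/orP=> /andP[/eqP-> /eqP->]; [exists true | exists false].
Qed.

Definition conflicts (T : finType) (d : T -> option bool) (t : T -> bool) :
  {set T} := [set p | d p == Some (~~ t p)].

Section Orientation.

Variables (V T : finType) (c : V -> T -> option bool).

Definition contested (v : V) : {set T} :=
  [set p | [exists w, opposed (c v p) (c w p)]].

Definition disputed : {set T} := [set p | [exists v, p \in contested v]].

Lemma card_contested_le v :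
  #|contested v| <= \sum_(w | w != v) #|[set p | opposed (c v p) (c w p)]|.
Proof.
apply: leq_trans (card_bigcup_le _ _); apply/subset_leq_card/subsetP => p.
rewrite inE => /existsP[w vw]; apply/bigcupP; exists w; last by rewrite inE.
apply: contraTneq vw => ->; apply/opposedP => -[b [-> []]].
by case: b.
Qed.

Lemma contestedP v p :
  reflect (exists w b, c v p = Some b /\ c w p = Some (~~ b))
          (p \in contested v).
Proof.
rewrite inE; apply: (iffP existsP) => [[w /opposedP[b]]|[w [b cvw]]].
  by exists w, b.
by exists w; apply/opposedP; exists b.
Qed.

Lemma contested_disputed v p :
  p \in disputed -> c v p != None -> p \in contested v.
Proof.
rewrite [p \in disputed]inE => /existsP[x /contestedP[y [b [cx cy]]]].
move=> cv; apply/contestedP; move: cv; case: (c v p) => [bv|] // _.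
have [<-|nb] := eqVneq b bv; first by exists y, b.
by exists x, bv; rewrite cx; case: b bv nb {cx cy} => [] [].
Qed.

Lemma opposed_disputed v w p : opposed (c v p) (c w p) -> p \in disputed.
Proof.
move=> vw; rewrite inE; apply/existsP; exists v.
by rewrite inE; apply/existsP; exists w.
Qed.

Lemma conflicts_contested t v (Q : {set T}) :
  Q \subset disputed -> conflicts (c v) t :&: Q \subset contested v :&: Q.
Proof.
move=> /subsetP QD; apply/subsetP => p /setIP[cvp pQ].
rewrite in_setI pQ andbT contested_disputed ?QD //.
by move: cvp; rewrite inE => /eqP->.
Qed.

Lemma exists_contest (Q : {set T}) a : Q \subset disputed -> Q != set0 ->
  exists e x y b, [/\ e \in Q, c x e = Some b, c y e = Some (~~ b)
                    & contested a :&: Q != set0 -> x = a].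
Proof.
move=> /subsetP QD /set0Pn[e0 e0Q].
have [aQ0|[e]] := set_0Vmem (contested a :&: Q).
  move: (QD _ e0Q); rewrite inE => /existsP[x /contestedP[y [b [cx cy]]]].
  by exists e0, x, y, b; rewrite aQ0 eqxx.
by rewrite inE => /andP[/contestedP[y [b [ca cy]]] eQ]; exists e, a, y, b.
Qed.

Hypothesis c_inj : forall v w p b, c v p = Some b -> c w p = Some b -> v = w.
Hypothesis card_contested_le2 : forall v, #|contested v| <= 2.

Lemma exists_orientation_on (Q : {set T}) (a : V) : Q \subset disputed ->
  exists t, (forall v, #|conflicts (c v) t :&: Q| <= 1) /\
            #|conflicts (c a) t :&: Q| <= #|contested a :&: Q|.-1.
Proof.
elim: {Q}_.+1 {-2}Q (ltnSn #|Q|) a => // m IH Q leQm a QD.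
have [->|Q0] := eqVneq Q set0.
  by exists (fun _ => false); split => [v|]; rewrite setI0 cards0.
have [e [x [y [b [eQ cx cy xa]]]]] := exists_contest a QD Q0.
have cardQ (A : {set T}) : #|A :&: Q| = (e \in A) + #|A :&: (Q :\ e)|.
  by rewrite (cardsD1 e) in_setI eQ andbT setIDA.
have QeD : Q :\ e \subset disputed by apply: subset_trans QD; apply: subsetDl.
(* Orient e towards y; recursing with target y leaves y no other hit. *)
have [|t' [t'_le1 t'_y]] := IH (Q :\ e) _ y QeD.
  by move: leQm; rewrite (cardsD1 e Q) eQ.
pose t p := if p == e then b else t' p.
have card_conflicts v :
    #|conflicts (c v) t :&: Q| = (v == y) + #|conflicts (c v) t' :&: (Q :\ e)|.
  have cvy : (c v e == Some (~~ b)) = (v == y).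
    by apply/idP/idP => [/eqP cv|/eqP->]; [rewrite (c_inj cv cy) | rewrite cy].
  rewrite cardQ inE /t eqxx cvy; congr (_ + _).
  apply: eq_card => p; rewrite !inE /t.
  by case: (p == e); rewrite ?andbF.
have ey : e \in contested y.
  by apply/contestedP; exists x, (~~ b); rewrite negbK.
exists t; split => [v|].
  rewrite card_conflicts; have [->|_] := eqVneq v y; last exact: t'_le1.
  have := leq_trans (subset_leq_card (subsetIl _ Q)) (card_contested_le2 y).
  rewrite cardQ ey add1n ltnS add1n ltnS leqn0 => le1.
  by rewrite -leqn0 (leq_trans t'_y); case: #|_| le1 => [|[]].
have [aQ0|/xa xa'] := eqVneq (contested a :&: Q) set0.
  by rewrite aQ0 cards0 leqn0 cards_eq0 -subset0 -aQ0 conflicts_contested.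
subst x; have ay : a != y.
  by apply: contraPneq cy => <-; rewrite cx => -[]; case: (b).
have ea : e \in contested a by apply/contestedP; exists y, b.
rewrite card_conflicts (negbTE ay) add0n cardQ ea add1n /=.
exact/subset_leq_card/conflicts_contested.
Qed.

Lemma exists_orientation :
  exists t : T -> bool, forall v, #|conflicts (c v) t| <= 1.
Proof.
case: (pickP (fun _ : V => true)) => [a _|V0].
  2: by exists (fun _ => false) => v; have := V0 v.
have [ts [ts_le1 _]] := exists_orientation_on a (subxx disputed).
pose holder_value p :=
  if [pick v | c v p != None] is Some v then odflt false (c v p) else false.
exists (fun p => if p \in disputed then ts p else holder_value p) => v.
apply: leq_trans (ts_le1 v); apply/subset_leq_card/subsetP => p.
rewrite in_setI [p \in conflicts _ _]inE.
case: (boolP (p \in disputed)) => pD; rewrite ?andbT //.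
  by rewrite inE.
rewrite andbF => /eqP; rewrite /holder_value.
case: pickP => [w /=|/(_ v)/=]; last by case: (c v p).
case cw: (c w p) => [bw|] //= _ cv; rewrite -(negbTE pD).
by apply: (@opposed_disputed w v); rewrite cw cv; apply/opposedP; exists bw.
Qed.

End Orientation.

Section Sensitivity.

Variables (n : nat) (f : input n -> bool).

Lemma agrees_conflicts (d : passign n) (y : input n) :
  agrees d y = (conflicts d y == set0).
Proof.
apply/forallP/eqP => [agr|/setP no_conflict i].
  apply/setP => i; rewrite !inE; move: (agr i).
  by case: (d i) => //= b /eqP->; case: b.
move: (no_conflict i); rewrite !inE.
by case: (d i) => //= b; case: b; case: (y i).
Qed.

Lemma conflicts_flip (d : passign n) (y : input n) p :
  p \in conflicts d y -> conflicts d (flip y p) = conflicts d y :\ p.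
Proof.
rewrite inE => /eqP dp; apply/setP => q; rewrite !inE /flip ffunE.
by case: (eqVneq q p) => [->|]; rewrite ?dp //=; case: (y p).
Qed.

Definition hamming (y : input n) (t : 'I_n -> bool) : nat :=
  #|[set p | y p != t p]|.

Lemma hamming_flip (y : input n) t p :
  y p != t p -> hamming (flip y p) t < hamming y t.
Proof.
move=> ytp; rewrite /hamming [X in _ < X](cardsD1 p) inE ytp add1n ltnS.
apply/subset_leq_card/subsetP => q; rewrite !inE /flip ffunE.
by case: (eqVneq q p) => [->|] //=; move: ytp; case: (y p); case: (t p).
Qed.

Lemma sensitive_conflict (d : passign n) (t : 'I_n -> bool) (y : input n) :
  one_cert f d -> ~~ f y -> (forall z, ~~ f z -> hamming y t <= hamming z t) ->
  #|conflicts d t| <= 1 -> exists2 p, p \in conflicts d y & f (flip y p).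
Proof.
move=> d_cert fy y_min d_le1.
have cert_f (z : input n) : conflicts d z = set0 -> f z.
  by move/eqP; rewrite -agrees_conflicts; apply/implyP/(forallP d_cert).
have [sub|[p]] := set_0Vmem (conflicts d y :\: conflicts d t); last first.
  rewrite inE => /andP[pt py]; exists p => //.
  apply/negPn/negP => /y_min; rewrite leqNgt hamming_flip //.
  by move: pt py; rewrite !inE => /[swap] /eqP->; apply: contraNneq => ->.
have [p py] : exists p, p \in conflicts d y.
  by apply/set0Pn; apply: contraNneq fy => /cert_f.
have y_le1 : #|conflicts d y| <= 1.
  by apply: leq_trans d_le1; apply/subset_leq_card; rewrite -setD_eq0 sub.
exists p => //; apply: cert_f; rewrite conflicts_flip //; apply/eqP.
by move: y_le1; rewrite (cardsD1 p) py add1n ltnS leqn0 cards_eq0.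
Qed.

Lemma conflicts_nonoverlap (d e : passign n) (y : input n) p :
  ~~ overlap d e -> p \in conflicts d y -> p \in conflicts e y -> False.
Proof.
move=> /negP no_overlap; rewrite !inE => dp ep; apply: no_overlap.
by apply/existsP; exists p; apply/existsP; exists (~~ y p); rewrite dp ep.
Qed.

Lemma card_le_s0 (V : finType) (c : V -> passign n) (t : 'I_n -> bool) :
  (exists x, ~~ f x) -> (forall v, one_cert f (c v)) ->
  (forall v w, v != w -> ~~ overlap (c v) (c w)) ->
  (forall v, #|conflicts (c v) t| <= 1) -> #|V| <= s0 f.
Proof.
move=> [x0 fx0] c_cert c_nov c_le1.
have [y fy y_min] := @arg_minnP _ x0 (fun z => ~~ f z) (hamming^~ t) fx0.
have sens_at v : exists p, (p \in conflicts (c v) y) && f (flip y p).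
  have [p ? ?] := sensitive_conflict (c_cert v) fy y_min (c_le1 v).
  by exists p; apply/andP.
pose g v := xchoose (sens_at v).
have g_inj : injective g.
  move=> v w gvw; apply/eqP/negPn/negP => /c_nov vw.
  have /andP[gv _] := xchooseP (sens_at v).
  have /andP[gw _] := xchooseP (sens_at w).
  rewrite -/(g v) -/(g w) -gvw in gv gw.
  exact: conflicts_nonoverlap vw gv gw.
apply: leq_trans (leq_bigmax_cond y fy).
rewrite /sens -cardsT -(card_imset _ g_inj).
apply/subset_leq_card/subsetP => _ /imsetP[v _ ->]; rewrite inE (negbTE fy).
by case/andP: (xchooseP (sens_at v)) => _ ->.
Qed.

End Sensitivity.

Theorem lemma4 (n k : nat) (f : input n -> bool) (c : 'I_k -> passign n) :
  (exists x : input n, f x = false) ->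
  (forall i, min_one_cert f (c i)) ->
  (forall i j, i != j -> ~~ overlap (c i) (c j)) ->
  (forall i, \sum_(j < k | j != i) ncontra (c i) (c j) <= 2) ->
  k <= s0 f.
Proof.
move=> [x0 fx0] c_min c_nov c_ncontra.
have c_cert i : one_cert f (c i) by case/andP: (c_min i).
have c_inj i j p b : c i p = Some b -> c j p = Some b -> i = j.
  move=> cip cjp; apply/eqP/negPn/negP => /c_nov/negP; apply.
  by apply/existsP; exists p; apply/existsP; exists b; rewrite cip cjp eqxx.
have contested_le2 i : #|contested (fun i p => c i p) i| <= 2.
  exact: leq_trans (card_contested_le _ i) (c_ncontra i).
have [t t_le1] := exists_orientation c_inj contested_le2.
rewrite -[k]card_ord; apply: card_le_s0 c_cert c_nov t_le1.
by exists x0; rewrite fx0.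
Qed.
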